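(* Fix $I_{ij},I_{jk},I_{ki}\in[0,\infty)$. Define $\rho_H:\mathbb{R}^3_{>0}\to\mathbb{R}^3_{>0}$ by $$\rho_H(r_i,r_j,r_k)=(l_{ij},l_{jk},l_{ki}),$$ where $l_{ij},l_{jk},l_{ki}>0$ are given by $$\cosh l_{ij}=\cosh r_i\cosh r_j+I_{ij}\sinh r_i\sinh r_j,$$ $$\cosh l_{jk}=\cosh r_j\cosh r_k+I_{jk}\sinh r_j\sinh r_k,$$ $$\cosh l_{ki}=\cosh r_k\cosh r_i+I_{ki}\sinh r_k\sinh r_i.$$ Then $\rho_H$ is injective, and it is a smooth embedding. Equivalently, for a fixed hyperbolic triangle there is at most one configuration of three circles, centered at its vertices, whose pairwise inversive distances are $I_{ij},I_{jk},I_{ki}$.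
   Context: The inversive distance of two hyperbolic circles of radii $r_1,r_2$ whose centers are at distance $l$ is $$\frac{\cosh l-\cosh r_1\cosh r_2}{\sinh r_1\sinh r_2}.$$ *)

From Stdlib Require Import Reals Lra.
Open Scope R_scope.

Definition acosh (x : R) : R := ln (x + sqrt (x * x - 1)).

(* Length of the edge between the centres of two circles of radii r1, r2
   with inversive distance I: the l > 0 with
   cosh l = cosh r1 cosh r2 + I sinh r1 sinh r2. *)
Definition edge_len (I r1 r2 : R) : R :=
  acosh (cosh r1 * cosh r2 + I * sinh r1 * sinh r2).

Definition rhoH (Iij Ijk Iki : R) (r : R * R * R) : R * R * R :=
  let '(ri, rj, rk) := r in
  (edge_len Iij ri rj, edge_len Ijk rj rk, edge_len Iki rk ri).

Definition pos3 (r : R * R * R) : Prop :=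
  let '(a, b, c) := r in 0 < a /\ 0 < b /\ 0 < c.

Definition dist3 (r s : R * R * R) : R :=
  let '(a, b, c) := r in let '(a', b', c') := s in
  Rmax (Rabs (a - a')) (Rmax (Rabs (b - b')) (Rabs (c - c'))).

Definition cont3 (f : R * R * R -> R) : Prop :=
  forall x, pos3 x -> forall eps, 0 < eps -> exists delta, 0 < delta /\
    forall y, pos3 y -> dist3 x y < delta -> Rabs (f y - f x) < eps.

Definition has_partials (f d1 d2 d3 : R * R * R -> R) : Prop :=
  forall a b c, pos3 (a, b, c) ->
    derivable_pt_lim (fun x => f (x, b, c)) a (d1 (a, b, c)) /\
    derivable_pt_lim (fun x => f (a, x, c)) b (d2 (a, b, c)) /\
    derivable_pt_lim (fun x => f (a, b, x)) c (d3 (a, b, c)).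

Fixpoint Ck (n : nat) (f : R * R * R -> R) : Prop :=
  cont3 f /\
  match n with
  | O => True
  | S m => exists d1 d2 d3, has_partials f d1 d2 d3 /\ Ck m d1 /\ Ck m d2 /\ Ck m d3
  end.

Definition smooth3 (f : R * R * R -> R) : Prop := forall n, Ck n f.

Definition comp1 (p : R * R * R) : R := let '(a, _, _) := p in a.
Definition comp2 (p : R * R * R) : R := let '(_, b, _) := p in b.
Definition comp3 (p : R * R * R) : R := let '(_, _, c) := p in c.

Definition det3 (a11 a12 a13 a21 a22 a23 a31 a32 a33 : R) : R :=
  a11 * (a22 * a33 - a23 * a32) - a12 * (a21 * a33 - a23 * a31)
  + a13 * (a21 * a32 - a22 * a31).

Definition partials_at (g : R * R * R -> R) (a b c d1 d2 d3 : R) : Prop :=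
  derivable_pt_lim (fun x => g (x, b, c)) a d1 /\
  derivable_pt_lim (fun x => g (a, x, c)) b d2 /\
  derivable_pt_lim (fun x => g (a, b, x)) c d3.

Definition immersion3 (F : R * R * R -> R * R * R) : Prop :=
  forall a b c, pos3 (a, b, c) ->
  exists J11 J12 J13 J21 J22 J23 J31 J32 J33 : R,
    partials_at (fun p => comp1 (F p)) a b c J11 J12 J13 /\
    partials_at (fun p => comp2 (F p)) a b c J21 J22 J23 /\
    partials_at (fun p => comp3 (F p)) a b c J31 J32 J33 /\
    det3 J11 J12 J13 J21 J22 J23 J31 J32 J33 <> 0.

(* F is a smooth embedding of R^3_{>0}: smooth components, immersion,
   injective, and a homeomorphism onto its image (continuous inverse). *)
Definition smooth_embedding3 (F : R * R * R -> R * R * R) : Prop :=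
  smooth3 (fun p => comp1 (F p)) /\ smooth3 (fun p => comp2 (F p)) /\
  smooth3 (fun p => comp3 (F p)) /\
  immersion3 F /\
  (forall x y, pos3 x -> pos3 y -> F x = F y -> x = y) /\
  (forall x, pos3 x -> forall eps, 0 < eps -> exists delta, 0 < delta /\
    forall y, pos3 y -> dist3 (F x) (F y) < delta -> dist3 x y < eps).

(* rhoH has the "cyclic" shape (a, b, c) |-> (f1 a b, f2 b c, f3 c a), where
   each edge function fi(r1, r2) = acosh (cosh r1 cosh r2 + I sinh r1 sinh r2)
   has strictly positive partial derivatives in both radii (I >= 0).  The
   whole theorem follows from general facts about such cyclic maps:
   - the Jacobian is [[x1, y1, 0]; [0, x2, y2]; [y3, 0, x3]] with determinant
     x1 x2 x3 + y1 y2 y3 > 0, so the map is an immersion;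
   - among the three increments of (a, b, c), two have the same sign; if,
     say, a and b move the same way, f1 a b controls both of them (f1 is
     increasing in each variable), and then f2 b c controls c.  This gives a
     continuous inverse on the image, hence injectivity. *)

From Stdlib Require Import Reals Lra Psatz FunctionalExtensionality.
Open Scope R_scope.

Lemma derivable_pt_lim_eq f x l l' :
  derivable_pt_lim f x l -> l = l' -> derivable_pt_lim f x l'.
Proof. intros H <-; exact H. Qed.

Lemma derivable_pt_lim_continuity f x l :
  derivable_pt_lim f x l -> continuity_pt f x.
Proof. intros H; apply derivable_continuous_pt; exists l; exact H. Qed.

Lemma continuity_pt_eps h c : continuity_pt h c -> forall eps, 0 < eps ->
  exists del, 0 < del /\ forall z, Rabs (z - c) < del -> Rabs (h z - h c) < eps.
Proof.
  intros H eps He. destruct (H eps He) as [del [Hd Hz]].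
  exists del; split; [exact Hd|]. intros z Hzc.
  destruct (Req_dec z c) as [->|Hne].
  - rewrite Rminus_diag, Rabs_R0; exact He.
  - apply (Hz z). split; [split; [exact I| congruence] | exact Hzc].
Qed.

Lemma pos_lower_bound a b : 0 < a -> 0 < b -> exists m, 0 < m /\ m <= a /\ m <= b.
Proof.
  intros. exists (Rmin a b). split; [now apply Rmin_pos|]. split; [apply Rmin_l|apply Rmin_r].
Qed.

Lemma dist3_coord_le a b c a' b' c' :
  Rabs (a - a') <= dist3 (a,b,c) (a',b',c') /\
  Rabs (b - b') <= dist3 (a,b,c) (a',b',c') /\
  Rabs (c - c') <= dist3 (a,b,c) (a',b',c').
Proof.
  simpl. split; [apply Rmax_l|]. split.
  - eapply Rle_trans; [apply Rmax_l| apply Rmax_r].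
  - eapply Rle_trans; [apply Rmax_r| apply Rmax_r].
Qed.

Lemma dist3_lt a b c a' b' c' e :
  Rabs (a - a') < e -> Rabs (b - b') < e -> Rabs (c - c') < e ->
  dist3 (a,b,c) (a',b',c') < e.
Proof. intros. simpl. repeat apply Rmax_lub_lt; assumption. Qed.

Lemma cont3_const k : cont3 (fun _ => k).
Proof.
  intros x _ eps He. exists 1; split; [lra|]. intros. rewrite Rminus_diag, Rabs_R0; lra.
Qed.

Lemma cont3_proj : cont3 comp1 /\ cont3 comp2 /\ cont3 comp3.
Proof.
  split; [|split]; intros [[a b] c] _ eps He; exists eps; (split; [lra|]);
    intros [[a' b'] c'] _ Hd; destruct (dist3_coord_le a b c a' b' c') as [H1 [H2 H3]];
    simpl; rewrite Rabs_minus_sym; lra.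
Qed.

Lemma cont3_plus f g : cont3 f -> cont3 g -> cont3 (fun p => f p + g p).
Proof.
  intros Hf Hg x Hx eps He.
  destruct (Hf x Hx (eps/2)) as [d1 [Hd1 H1]]; [lra|].
  destruct (Hg x Hx (eps/2)) as [d2 [Hd2 H2]]; [lra|].
  destruct (pos_lower_bound d1 d2 Hd1 Hd2) as [d [Hd [Hdd1 Hdd2]]].
  exists d; split; [exact Hd|]. intros y Hy Hxy.
  specialize (H1 y Hy ltac:(lra)). specialize (H2 y Hy ltac:(lra)).
  replace (f y + g y - (f x + g x)) with ((f y - f x) + (g y - g x)) by ring.
  eapply Rle_lt_trans; [apply Rabs_triang|]. lra.
Qed.

Lemma cont3_comp h f : cont3 f -> (forall x, pos3 x -> continuity_pt h (f x)) ->
  cont3 (fun p => h (f p)).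
Proof.
  intros Hf Hh x Hx eps He.
  destruct (continuity_pt_eps h (f x) (Hh x Hx) eps He) as [d1 [Hd1 H1]].
  destruct (Hf x Hx d1 Hd1) as [d2 [Hd2 H2]].
  exists d2; split; [exact Hd2|]. intros y Hy Hxy. apply H1, H2; assumption.
Qed.

Lemma cont3_scal k f : cont3 f -> cont3 (fun p => k * f p).
Proof.
  intros Hf. apply (cont3_comp (fun z => k * z)); [exact Hf|]. intros x _.
  apply (derivable_pt_lim_continuity _ _ (k * 1)).
  exact (derivable_pt_lim_scal id k _ 1 (derivable_pt_lim_id _)).
Qed.

Lemma cont3_square f : cont3 f -> cont3 (fun p => f p * f p).
Proof.
  intros Hf. apply (cont3_comp (fun z => z * z)); [exact Hf|]. intros x _.
  apply (derivable_pt_lim_continuity _ _ (1 * f x + f x * 1)).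
  exact (derivable_pt_lim_mult id id _ 1 1 (derivable_pt_lim_id _) (derivable_pt_lim_id _)).
Qed.

(* Products, by polarization: f g = ((f + g)^2 - (f - g)^2) / 4. *)
Lemma cont3_mult f g : cont3 f -> cont3 g -> cont3 (fun p => f p * g p).
Proof.
  intros Hf Hg.
  assert (Hsum := cont3_square _ (cont3_plus _ _ Hf Hg)).
  assert (Hdiff := cont3_square _ (cont3_plus _ _ Hf (cont3_scal (-1) _ Hg))).
  assert (H := cont3_scal (/4) _ (cont3_plus _ _ Hsum (cont3_scal (-1) _ Hdiff))).
  replace (fun p => f p * g p) with
    (fun p => /4 * ((f p + g p) * (f p + g p) + -1 * ((f p + -1 * g p) * (f p + -1 * g p))));
    [exact H|].
  apply functional_extensionality; intros p; field.
Qed.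

Lemma Ck_cont n f : Ck n f -> cont3 f.
Proof. destruct n; simpl; tauto. Qed.

Lemma Ck_pred n : forall f, Ck (S n) f -> Ck n f.
Proof.
  induction n as [|n IH]; intros f H.
  - simpl in *. tauto.
  - destruct H as [Hc [d1 [d2 [d3 [Hp [H1 [H2 H3]]]]]]].
    split; [exact Hc|]. exists d1, d2, d3. auto.
Qed.

Lemma Ck_ext n f g : Ck n f -> (forall p, f p = g p) -> Ck n g.
Proof. intros H E. replace g with f; [exact H|]. apply functional_extensionality; exact E. Qed.

Lemma Ck_const n : forall k, Ck n (fun _ => k).
Proof.
  induction n as [|n IH]; intros k; (split; [apply cont3_const|]); [exact I|].
  exists (fun _ => 0), (fun _ => 0), (fun _ => 0).
  split; [|auto]. intros a b c _. repeat split; apply derivable_pt_lim_const.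
Qed.

Lemma Ck_proj n : Ck n comp1 /\ Ck n comp2 /\ Ck n comp3.
Proof.
  destruct cont3_proj as [C1 [C2 C3]].
  destruct n; [repeat split; assumption|].
  split; [|split]; (split; [assumption|]).
  - exists (fun _ => 1), (fun _ => 0), (fun _ => 0). split; [|repeat split; apply Ck_const].
    intros a b c _. repeat split;
      [apply derivable_pt_lim_id | apply derivable_pt_lim_const ..].
  - exists (fun _ => 0), (fun _ => 1), (fun _ => 0). split; [|repeat split; apply Ck_const].
    intros a b c _. repeat split;
      [apply derivable_pt_lim_const | apply derivable_pt_lim_id | apply derivable_pt_lim_const].
  - exists (fun _ => 0), (fun _ => 0), (fun _ => 1). split; [|repeat split; apply Ck_const].
    intros a b c _. repeat split;
      [apply derivable_pt_lim_const .. | apply derivable_pt_lim_id].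
Qed.

Lemma Ck_plus n : forall f g, Ck n f -> Ck n g -> Ck n (fun p => f p + g p).
Proof.
  induction n as [|n IH]; intros f g Hf Hg;
    (split; [apply cont3_plus; eapply Ck_cont; eassumption|]); [exact I|].
  destruct Hf as [_ [d1 [d2 [d3 [Hp [H1 [H2 H3]]]]]]].
  destruct Hg as [_ [e1 [e2 [e3 [Hq [G1 [G2 G3]]]]]]].
  exists (fun p => d1 p + e1 p), (fun p => d2 p + e2 p), (fun p => d3 p + e3 p).
  split; [|auto].
  intros a b c Hx. destruct (Hp a b c Hx) as [P1 [P2 P3]].
  destruct (Hq a b c Hx) as [Q1 [Q2 Q3]].
  repeat split; apply derivable_pt_lim_plus; assumption.
Qed.

Lemma Ck_mult n : forall f g, Ck n f -> Ck n g -> Ck n (fun p => f p * g p).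
Proof.
  induction n as [|n IH]; intros f g Hf Hg;
    (split; [apply cont3_mult; eapply Ck_cont; eassumption|]); [exact I|].
  assert (Hf' := Ck_pred _ _ Hf). assert (Hg' := Ck_pred _ _ Hg).
  destruct Hf as [_ [d1 [d2 [d3 [Hp [H1 [H2 H3]]]]]]].
  destruct Hg as [_ [e1 [e2 [e3 [Hq [G1 [G2 G3]]]]]]].
  exists (fun p => d1 p * g p + f p * e1 p), (fun p => d2 p * g p + f p * e2 p),
    (fun p => d3 p * g p + f p * e3 p).
  split; [|repeat split; apply Ck_plus; apply IH; assumption].
  intros a b c Hx. destruct (Hp a b c Hx) as [P1 [P2 P3]].
  destruct (Hq a b c Hx) as [Q1 [Q2 Q3]].
  repeat split; apply derivable_pt_lim_mult; assumption.
Qed.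

Definition Ck_stable (P : R -> Prop) (h : R -> R) (n : nat) : Prop :=
  forall f, Ck n f -> (forall p, pos3 p -> P (f p)) -> Ck n (fun p => h (f p)).

Lemma Ck_stable_0 h h' P :
  (forall y, P y -> derivable_pt_lim h y (h' y)) -> Ck_stable P h 0.
Proof.
  intros Hd f Hf HP. split; [|exact I].
  apply cont3_comp; [exact (Ck_cont _ _ Hf)|].
  intros x Hx. eapply derivable_pt_lim_continuity. apply Hd, HP, Hx.
Qed.

Lemma Ck_stable_S h h' P n :
  (forall y, P y -> derivable_pt_lim h y (h' y)) -> Ck_stable P h' n ->
  Ck_stable P h (S n).
Proof.
  intros Hd Hh' f Hf HP. split.
  - exact (Ck_cont _ _ (Ck_stable_0 h h' P Hd f (conj (Ck_cont _ _ Hf) I) HP)).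
  - assert (Hf' := Ck_pred _ _ Hf).
    destruct Hf as [_ [d1 [d2 [d3 [Hp [H1 [H2 H3]]]]]]].
    exists (fun p => h' (f p) * d1 p), (fun p => h' (f p) * d2 p),
      (fun p => h' (f p) * d3 p).
    split; [|repeat split; apply Ck_mult; auto].
    intros a b c Hx. destruct (Hp a b c Hx) as [P1 [P2 P3]].
    assert (Hh := Hd _ (HP _ Hx)).
    repeat split; eapply derivable_pt_lim_comp; eassumption.
Qed.

Lemma Ck_inv n : Ck_stable (Rlt 0) Rinv n.
Proof.
  assert (Hd : forall y, 0 < y -> derivable_pt_lim Rinv y (-1 * (/ y * / y))).
  { intros y Hy. apply (derivable_pt_lim_eq _ _ (- 1 / (y * y))).
    - apply (derive_pt_eq_1 _ _ _ (derivable_pt_inv id y ltac:(unfold id; lra)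
        (derivable_pt_id y))).
      rewrite derive_pt_inv, derive_pt_id. reflexivity.
    - field. lra. }
  induction n as [|n IH]; [exact (Ck_stable_0 _ _ _ Hd)|].
  apply (Ck_stable_S _ _ _ _ Hd). intros f Hf HP.
  apply Ck_mult; [apply Ck_const|]. apply Ck_mult; apply IH; assumption.
Qed.

Lemma Ck_sqrt n : Ck_stable (Rlt 0) sqrt n.
Proof.
  assert (Hd : forall y, 0 < y -> derivable_pt_lim sqrt y (/2 * / sqrt y)).
  { intros y Hy. eapply derivable_pt_lim_eq; [apply derivable_pt_lim_sqrt; exact Hy|].
    assert (0 < sqrt y) by (apply sqrt_lt_R0; exact Hy). field. lra. }
  induction n as [|n IH]; [exact (Ck_stable_0 _ _ _ Hd)|].
  apply (Ck_stable_S _ _ _ _ Hd). intros f Hf HP.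
  apply Ck_mult; [apply Ck_const|]. apply Ck_inv; [apply IH; assumption|].
  intros p Hp; apply sqrt_lt_R0, HP, Hp.
Qed.

Lemma Ck_cosh_sinh n :
  Ck_stable (fun _ => True) cosh n /\ Ck_stable (fun _ => True) sinh n.
Proof.
  assert (Dc : forall y, True -> derivable_pt_lim cosh y (sinh y))
    by (intros; apply derivable_pt_lim_cosh).
  assert (Ds : forall y, True -> derivable_pt_lim sinh y (cosh y))
    by (intros; apply derivable_pt_lim_sinh).
  induction n as [|n [IHc IHs]].
  - exact (conj (Ck_stable_0 _ _ _ Dc) (Ck_stable_0 _ _ _ Ds)).
  - exact (conj (Ck_stable_S _ _ _ _ Dc IHs) (Ck_stable_S _ _ _ _ Ds IHc)).
Qed.

Lemma increasing_of_pos_deriv f f' x y : x < y ->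
  (forall t, x <= t <= y -> derivable_pt_lim f t (f' t)) ->
  (forall t, x < t < y -> 0 < f' t) -> f x < f y.
Proof.
  intros Hxy Hd Hpos. destruct (MVT_cor2 f f' x y Hxy Hd) as [t [Ht Hint]].
  assert (0 < f' t) by (apply Hpos; exact Hint). nra.
Qed.

Definition positive_partials (f dl dr : R -> R -> R) : Prop :=
  forall a b, 0 < a -> 0 < b ->
    derivable_pt_lim (fun x => f x b) a (dl a b) /\
    derivable_pt_lim (fun x => f a x) b (dr a b) /\
    0 < dl a b /\ 0 < dr a b.

Definition increasing2 (f : R -> R -> R) : Prop :=
  (forall b x y, 0 < b -> 0 < x -> x < y -> f x b < f y b) /\
  (forall a x y, 0 < a -> 0 < x -> x < y -> f a x < f a y).

Definition continuous_l (f : R -> R -> R) : Prop :=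
  forall a b, 0 < a -> 0 < b -> continuity_pt (fun x => f x b) a.

Lemma positive_partials_increasing f dl dr :
  positive_partials f dl dr -> increasing2 f.
Proof.
  intros H. split.
  - intros b x y Hb Hx Hxy. apply (increasing_of_pos_deriv (fun t => f t b) (fun t => dl t b) _ _ Hxy).
    + intros t Ht. apply (H t b); lra.
    + intros t Ht. apply (H t b); lra.
  - intros a x y Ha Hx Hxy. apply (increasing_of_pos_deriv (fun t => f a t) (fun t => dr a t) _ _ Hxy).
    + intros t Ht. apply (H a t); lra.
    + intros t Ht. apply (H a t); lra.
Qed.

Lemma positive_partials_continuous_l f dl dr :
  positive_partials f dl dr -> continuous_l f.
Proof.
  intros H a b Ha Hb. eapply derivable_pt_lim_continuity. apply (H a b Ha Hb).
Qed.

Definition same_sign (u v : R) : Prop := (0 <= u /\ 0 <= v) \/ (u <= 0 /\ v <= 0).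

Lemma same_sign_pigeonhole x y z : same_sign x y \/ same_sign y z \/ same_sign z x.
Proof.
  unfold same_sign.
  destruct (Rle_or_lt 0 x), (Rle_or_lt 0 y), (Rle_or_lt 0 z);
    first [left; lra | right; left; lra | right; right; lra].
Qed.

Section IncreasingEdge.

Variable f : R -> R -> R.
Hypothesis Hf : increasing2 f.

Lemma increasing2_le_l b x y : 0 < b -> 0 < x -> x <= y -> f x b <= f y b.
Proof. intros Hb Hx [Hxy| <-]; [left; apply Hf|right]; auto. Qed.

Lemma increasing2_le_r a x y : 0 < a -> 0 < x -> x <= y -> f a x <= f a y.
Proof. intros Ha Hx [Hxy| <-]; [left; apply Hf|right]; auto. Qed.

Lemma same_sign_control p q eta : 0 < p -> 0 < q -> 0 < eta ->
  exists g, 0 < g /\ forall p' q', 0 < p' -> 0 < q' -> same_sign (p' - p) (q' - q) ->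
    Rabs (f p' q' - f p q) < g -> Rabs (p' - p) < eta /\ Rabs (q' - q) < eta.
Proof.
  intros Hp Hq Heta.
  destruct (pos_lower_bound (p/2) (q/2)) as [e0 [He0 [Hep Heq]]]; [lra|lra|].
  destruct (pos_lower_bound eta e0 Heta He0) as [e [He [Hee Hee0]]].
  destruct Hf as [Ml Mr].
  assert (G1 := Ml q p (p+e) Hq Hp ltac:(lra)).
  assert (G2 := Ml q (p-e) p Hq ltac:(lra) ltac:(lra)).
  assert (G3 := Mr p q (q+e) Hp Hq ltac:(lra)).
  assert (G4 := Mr p (q-e) q Hp ltac:(lra) ltac:(lra)).
  destruct (pos_lower_bound (f (p+e) q - f p q) (f p q - f (p-e) q)) as [gp [Hgp [Hgp1 Hgp2]]];
    [lra|lra|].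
  destruct (pos_lower_bound (f p (q+e) - f p q) (f p q - f p (q-e))) as [gq [Hgq [Hgq1 Hgq2]]];
    [lra|lra|].
  destruct (pos_lower_bound gp gq Hgp Hgq) as [g [Hg [Hggp Hggq]]].
  exists g; split; [exact Hg|]. intros p' q' Hp' Hq' [[Sp Sq]|[Sp Sq]] Hd;
    apply Rabs_def2 in Hd; split; apply Rabs_def1; try lra.
  - destruct (Rlt_or_le (p' - p) e) as [|Hc]; [lra|].
    assert (f (p+e) q <= f p' q) by (apply increasing2_le_l; lra).
    assert (f p' q <= f p' q') by (apply increasing2_le_r; lra). lra.
  - destruct (Rlt_or_le (q' - q) e) as [|Hc]; [lra|].
    assert (f p (q+e) <= f p q') by (apply increasing2_le_r; lra).
    assert (f p q' <= f p' q') by (apply increasing2_le_l; lra). lra.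
  - destruct (Rlt_or_le (p - p') e) as [|Hc]; [lra|].
    assert (f p' q <= f (p-e) q) by (apply increasing2_le_l; lra).
    assert (f p' q' <= f p' q) by (apply increasing2_le_r; lra). lra.
  - destruct (Rlt_or_le (q - q') e) as [|Hc]; [lra|].
    assert (f p q' <= f p (q-e)) by (apply increasing2_le_r; lra).
    assert (f p' q' <= f p q') by (apply increasing2_le_l; lra). lra.
Qed.

Hypothesis Hcont : continuous_l f.

Lemma second_variable_control p q eta : 0 < p -> 0 < q -> 0 < eta ->
  exists g d, 0 < g /\ 0 < d /\ forall p' q', 0 < p' -> 0 < q' -> Rabs (p' - p) < d ->
    Rabs (f p' q' - f p q) < g -> Rabs (q' - q) < eta.
Proof.
  intros Hp Hq Heta.
  destruct (pos_lower_bound eta (q/2)) as [e [He [Hee Heq]]]; [lra|lra|].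
  destruct Hf as [_ Mr].
  set (G1 := f p (q+e) - f p q). set (G2 := f p q - f p (q-e)).
  assert (HG1 : 0 < G1) by (assert (f p q < f p (q+e)) by (apply Mr; lra); unfold G1; lra).
  assert (HG2 : 0 < G2) by (assert (f p (q-e) < f p q) by (apply Mr; lra); unfold G2; lra).
  destruct (continuity_pt_eps _ _ (Hcont p (q+e) Hp ltac:(lra)) (G1/2)) as [d1 [Hd1 C1]];
    [lra|].
  destruct (continuity_pt_eps _ _ (Hcont p (q-e) Hp ltac:(lra)) (G2/2)) as [d2 [Hd2 C2]];
    [lra|].
  destruct (pos_lower_bound (G1/2) (G2/2)) as [g [Hg [Hg1 Hg2]]]; [lra|lra|].
  destruct (pos_lower_bound d1 d2 Hd1 Hd2) as [d [Hd [Hdd1 Hdd2]]].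
  exists g, d. split; [exact Hg|]. split; [exact Hd|].
  intros p' q' Hp' Hq' Hpp Hdf.
  specialize (C1 p' ltac:(lra)). specialize (C2 p' ltac:(lra)). cbv beta in C1, C2.
  apply Rabs_def2 in C1. apply Rabs_def2 in C2. apply Rabs_def2 in Hdf.
  unfold G1, G2 in *. apply Rabs_def1.
  - destruct (Rlt_or_le (q' - q) e) as [|Hc]; [lra|].
    assert (f p' (q+e) <= f p' q') by (apply increasing2_le_r; lra). lra.
  - destruct (Rlt_or_le (q - q') e) as [|Hc]; [lra|].
    assert (f p' q' <= f p' (q-e)) by (apply increasing2_le_r; lra). lra.
Qed.

End IncreasingEdge.

Lemma two_edges_control f g : increasing2 f -> increasing2 g -> continuous_l g ->
  forall a b c eps, 0 < a -> 0 < b -> 0 < c -> 0 < eps ->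
  exists del, 0 < del /\ forall a' b' c', 0 < a' -> 0 < b' -> 0 < c' ->
    same_sign (a' - a) (b' - b) ->
    Rabs (f a' b' - f a b) < del -> Rabs (g b' c' - g b c) < del ->
    Rabs (a' - a) < eps /\ Rabs (b' - b) < eps /\ Rabs (c' - c) < eps.
Proof.
  intros Hf Hg Hgc a b c eps Ha Hb Hc Heps.
  destruct (second_variable_control g Hg Hgc b c eps Hb Hc Heps)
    as [gc [dc [Hgc0 [Hdc0 Tc]]]].
  destruct (pos_lower_bound dc eps Hdc0 Heps) as [e [He [Hedc Heeps]]].
  destruct (same_sign_control f Hf a b e Ha Hb He) as [gab [Hgab Tab]].
  destruct (pos_lower_bound gab gc Hgab Hgc0) as [del [Hdel [Hdab Hdc]]].
  exists del; split; [exact Hdel|].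
  intros a' b' c' Ha' Hb' Hc' Hs H1 H2.
  destruct (Tab a' b' Ha' Hb' Hs ltac:(lra)) as [A B].
  assert (C := Tc b' c' Hb' Hc' ltac:(lra) ltac:(lra)). lra.
Qed.

Definition cyclic_map (f1 f2 f3 : R -> R -> R) (r : R * R * R) : R * R * R :=
  let '(a, b, c) := r in (f1 a b, f2 b c, f3 c a).

Definition inverse_continuous3 (F : R * R * R -> R * R * R) : Prop :=
  forall x, pos3 x -> forall eps, 0 < eps -> exists delta, 0 < delta /\
    forall y, pos3 y -> dist3 (F x) (F y) < delta -> dist3 x y < eps.

(* Of the three increments, two have the same sign (pigeonhole); the two
   edges starting with that pair then control everything. *)
Lemma cyclic_inverse_continuous f1 f2 f3 :
  increasing2 f1 -> increasing2 f2 -> increasing2 f3 ->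
  continuous_l f1 -> continuous_l f2 -> continuous_l f3 ->
  inverse_continuous3 (cyclic_map f1 f2 f3).
Proof.
  intros M1 M2 M3 C1 C2 C3 [[a b] c] [Ha [Hb Hc]] eps Heps.
  destruct (two_edges_control f1 f2 M1 M2 C2 a b c eps Ha Hb Hc Heps) as [d1 [Hd1 T1]].
  destruct (two_edges_control f2 f3 M2 M3 C3 b c a eps Hb Hc Ha Heps) as [d2 [Hd2 T2]].
  destruct (two_edges_control f3 f1 M3 M1 C1 c a b eps Hc Ha Hb Heps) as [d3 [Hd3 T3]].
  destruct (pos_lower_bound d1 d2 Hd1 Hd2) as [d12 [Hd12 [Hd121 Hd122]]].
  destruct (pos_lower_bound d12 d3 Hd12 Hd3) as [del [Hdel [Hdel12 Hdel3]]].
  exists del; split; [exact Hdel|].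
  intros [[a' b'] c'] [Ha' [Hb' Hc']] Hdist.
  change (dist3 (f1 a b, f2 b c, f3 c a) (f1 a' b', f2 b' c', f3 c' a') < del) in Hdist.
  destruct (dist3_coord_le (f1 a b) (f2 b c) (f3 c a) (f1 a' b') (f2 b' c') (f3 c' a'))
    as [E1 [E2 E3]].
  rewrite Rabs_minus_sym in E1, E2, E3.
  assert (Goal : Rabs (a' - a) < eps /\ Rabs (b' - b) < eps /\ Rabs (c' - c) < eps).
  { destruct (same_sign_pigeonhole (a' - a) (b' - b) (c' - c)) as [S|[S|S]].
    - apply (T1 a' b' c'); auto; lra.
    - destruct (T2 b' c' a') as [B [C A]]; auto; lra.
    - destruct (T3 c' a' b') as [C [A B]]; auto; lra. }
  destruct Goal as [A [B C]].
  rewrite Rabs_minus_sym in A, B, C. apply dist3_lt; assumption.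
Qed.

Lemma inverse_continuous3_injective F : inverse_continuous3 F ->
  forall x y, pos3 x -> pos3 y -> F x = F y -> x = y.
Proof.
  intros H [[a b] c] [[a' b'] c'] Hx Hy E.
  assert (Small : forall eps, 0 < eps -> dist3 (a, b, c) (a', b', c') < eps).
  { intros eps Heps. destruct (H _ Hx eps Heps) as [del [Hdel T]].
    apply T; [exact Hy|]. rewrite <- E. destruct (F (a, b, c)) as [[u v] w].
    apply dist3_lt; rewrite Rminus_diag, Rabs_R0; exact Hdel. }
  destruct (dist3_coord_le a b c a' b' c') as [A [B C]].
  assert (Ea : a = a').
  { destruct (Req_dec a a') as [|Hne]; [assumption|].
    specialize (Small _ (Rabs_pos_lt _ (Rminus_eq_contra _ _ Hne))). lra. }
  assert (Eb : b = b').
  { destruct (Req_dec b b') as [|Hne]; [assumption|].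
    specialize (Small _ (Rabs_pos_lt _ (Rminus_eq_contra _ _ Hne))). lra. }
  assert (Ec : c = c').
  { destruct (Req_dec c c') as [|Hne]; [assumption|].
    specialize (Small _ (Rabs_pos_lt _ (Rminus_eq_contra _ _ Hne))). lra. }
  subst; reflexivity.
Qed.

(* The Jacobian of a cyclic map has determinant dl1 dl2 dl3 + dr1 dr2 dr3 > 0. *)
Lemma cyclic_immersion f1 f2 f3 dl1 dr1 dl2 dr2 dl3 dr3 :
  positive_partials f1 dl1 dr1 -> positive_partials f2 dl2 dr2 ->
  positive_partials f3 dl3 dr3 -> immersion3 (cyclic_map f1 f2 f3).
Proof.
  intros P1 P2 P3 a b c [Ha [Hb Hc]].
  destruct (P1 a b Ha Hb) as [L1 [R1 [Pl1 Pr1]]].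
  destruct (P2 b c Hb Hc) as [L2 [R2 [Pl2 Pr2]]].
  destruct (P3 c a Hc Ha) as [L3 [R3 [Pl3 Pr3]]].
  exists (dl1 a b), (dr1 a b), 0, 0, (dl2 b c), (dr2 b c), (dr3 c a), 0, (dl3 c a).
  split; [|split; [|split]].
  - split; [exact L1|split; [exact R1|apply derivable_pt_lim_const]].
  - split; [apply derivable_pt_lim_const|split; [exact L2|exact R2]].
  - split; [exact R3|split; [apply derivable_pt_lim_const|exact L3]].
  - unfold det3.
    replace (dl1 a b * (dl2 b c * dl3 c a - dr2 b c * 0) - dr1 a b * (0 * dl3 c a - dr2 b c * dr3 c a)
      + 0 * (0 * 0 - dl2 b c * dr3 c a))
      with (dl1 a b * dl2 b c * dl3 c a + dr1 a b * dr2 b c * dr3 c a) by ring.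
    apply Rgt_not_eq, Rplus_lt_0_compat; repeat apply Rmult_lt_0_compat; assumption.
Qed.

Definition preserves_smooth (f : R -> R -> R) : Prop :=
  forall u v, smooth3 u -> smooth3 v ->
  (forall p, pos3 p -> 0 < u p) -> (forall p, pos3 p -> 0 < v p) ->
  smooth3 (fun p => f (u p) (v p)).

Lemma cyclic_map_smooth f1 f2 f3 :
  preserves_smooth f1 -> preserves_smooth f2 -> preserves_smooth f3 ->
  smooth3 (fun p => comp1 (cyclic_map f1 f2 f3 p)) /\
  smooth3 (fun p => comp2 (cyclic_map f1 f2 f3 p)) /\
  smooth3 (fun p => comp3 (cyclic_map f1 f2 f3 p)).
Proof.
  intros S1 S2 S3.
  assert (Hproj : smooth3 comp1 /\ smooth3 comp2 /\ smooth3 comp3)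
    by (split; [|split]; intros n; apply (Ck_proj n)).
  destruct Hproj as [C1 [C2 C3]].
  assert (P1 : forall p, pos3 p -> 0 < comp1 p) by (intros [[a b] c] H; apply H).
  assert (P2 : forall p, pos3 p -> 0 < comp2 p) by (intros [[a b] c] H; apply H).
  assert (P3 : forall p, pos3 p -> 0 < comp3 p) by (intros [[a b] c] H; apply H).
  split; [|split]; intros n; eapply Ck_ext.
  - exact (S1 comp1 comp2 C1 C2 P1 P2 n).
  - intros [[a b] c]; reflexivity.
  - exact (S2 comp2 comp3 C2 C3 P2 P3 n).
  - intros [[a b] c]; reflexivity.
  - exact (S3 comp3 comp1 C3 C1 P3 P1 n).
  - intros [[a b] c]; reflexivity.
Qed.

Lemma sinh_pos x : 0 < x -> 0 < sinh x.
Proof. intros Hx. rewrite <- sinh_0. apply sinh_lt, Hx. Qed.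

Lemma cosh_gt_1 x : 0 < x -> 1 < cosh x.
Proof.
  intros Hx. rewrite <- cosh_0. apply (increasing_of_pos_deriv cosh sinh 0 x Hx).
  - intros t _. apply derivable_pt_lim_cosh.
  - intros t Ht. apply sinh_pos; lra.
Qed.

Lemma acosh_pos y : 1 < y -> 0 < acosh y.
Proof.
  intros Hy. unfold acosh. rewrite <- ln_1. apply ln_increasing; [lra|].
  assert (0 <= sqrt (y * y - 1)) by apply sqrt_pos. lra.
Qed.

Lemma acosh_deriv y : 1 < y -> derivable_pt_lim acosh y (/ sqrt (y * y - 1)).
Proof.
  intros Hy.
  assert (Hy2 : 0 < y * y - 1) by nra.
  assert (Hs : 0 < sqrt (y * y - 1)) by (apply sqrt_lt_R0; exact Hy2).
  assert (Hsq : derivable_pt_lim (fun z => z * z - 1) y (1 * y + y * 1)).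
  { eapply derivable_pt_lim_eq; [apply (derivable_pt_lim_minus (fun z => z * z) (fct_cte 1))|].
    - exact (derivable_pt_lim_mult id id y 1 1 (derivable_pt_lim_id y) (derivable_pt_lim_id y)).
    - apply derivable_pt_lim_const.
    - unfold id. ring. }
  assert (Hroot := derivable_pt_lim_comp _ sqrt y _ _ Hsq (derivable_pt_lim_sqrt _ Hy2)).
  assert (Harg := derivable_pt_lim_plus id _ y _ _ (derivable_pt_lim_id y) Hroot).
  assert (Hpos : 0 < y + sqrt (y * y - 1)) by lra.
  eapply derivable_pt_lim_eq.
  - exact (derivable_pt_lim_comp _ ln y _ _ Harg (derivable_pt_lim_ln _ Hpos)).
  - unfold id. field. split; lra.
Qed.

Lemma Ck_acosh n : Ck_stable (Rlt 1) acosh n.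
Proof.
  assert (Hd : forall y, 1 < y -> derivable_pt_lim acosh y (/ sqrt (y * y - 1)))
    by exact acosh_deriv.
  destruct n as [|n]; [exact (Ck_stable_0 _ _ _ Hd)|].
  apply (Ck_stable_S _ _ _ _ Hd). intros f Hf HP.
  assert (Harg : Ck n (fun p => f p * f p + -1)) by
    (apply Ck_plus; [apply Ck_mult; assumption|apply Ck_const]).
  assert (Hpos : forall p, pos3 p -> 0 < f p * f p + -1) by
    (intros p Hp; specialize (HP p Hp); simpl in HP; nra).
  apply Ck_inv.
  - exact (Ck_sqrt n _ Harg Hpos).
  - intros p Hp. apply sqrt_lt_R0. specialize (Hpos p Hp). lra.
Qed.

Definition cosh_edge (I r1 r2 : R) : R := cosh r1 * cosh r2 + I * sinh r1 * sinh r2.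

Lemma cosh_edge_gt_1 I a b : 0 <= I -> 0 < a -> 0 < b -> 1 < cosh_edge I a b.
Proof.
  intros HI Ha Hb. unfold cosh_edge.
  assert (H1 := cosh_gt_1 a Ha). assert (H2 := cosh_gt_1 b Hb).
  assert (H3 := sinh_pos a Ha). assert (H4 := sinh_pos b Hb).
  assert (0 <= I * sinh a * sinh b) by (apply Rmult_le_pos; [apply Rmult_le_pos|]; lra).
  nra.
Qed.

Lemma edge_len_pos I a b : 0 <= I -> 0 < a -> 0 < b -> 0 < edge_len I a b.
Proof. intros. apply acosh_pos, cosh_edge_gt_1; assumption. Qed.

Lemma edge_len_sym I a b : edge_len I a b = edge_len I b a.
Proof. unfold edge_len. f_equal. ring. Qed.

Definition edge_deriv (I a b : R) : R :=
  (sinh a * cosh b + I * cosh a * sinh b) / sqrt (cosh_edge I a b * cosh_edge I a b - 1).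

Lemma edge_len_deriv I a b : 0 <= I -> 0 < a -> 0 < b ->
  derivable_pt_lim (fun x => edge_len I x b) a (edge_deriv I a b).
Proof.
  intros HI Ha Hb.
  assert (Harg : derivable_pt_lim (fun x => cosh_edge I x b) a
                   (sinh a * cosh b + I * cosh a * sinh b)).
  { apply (derivable_pt_lim_plus (fun x => cosh x * cosh b) (fun x => I * sinh x * sinh b)).
    - apply derivable_pt_lim_scal_right, derivable_pt_lim_cosh.
    - apply (derivable_pt_lim_scal_right (fun x => I * sinh x)).
      apply (derivable_pt_lim_scal sinh), derivable_pt_lim_sinh. }
  eapply derivable_pt_lim_eq.
  - exact (derivable_pt_lim_comp _ acosh a _ _ Harg (acosh_deriv _ (cosh_edge_gt_1 I a b HI Ha Hb))).
  - unfold edge_deriv, Rdiv. ring.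
Qed.

Lemma edge_deriv_pos I a b : 0 <= I -> 0 < a -> 0 < b -> 0 < edge_deriv I a b.
Proof.
  intros HI Ha Hb. unfold edge_deriv.
  assert (H := cosh_edge_gt_1 I a b HI Ha Hb).
  assert (Hsa := sinh_pos a Ha). assert (Hsb := sinh_pos b Hb).
  assert (Hca := cosh_gt_1 a Ha). assert (Hcb := cosh_gt_1 b Hb).
  assert (0 <= I * cosh a * sinh b) by (apply Rmult_le_pos; [apply Rmult_le_pos|]; lra).
  apply Rdiv_lt_0_compat; [nra|]. apply sqrt_lt_R0. nra.
Qed.

Lemma edge_len_positive_partials I : 0 <= I ->
  positive_partials (edge_len I) (edge_deriv I) (fun a b => edge_deriv I b a).
Proof.
  intros HI a b Ha Hb. split; [|split; [|split]].
  - apply edge_len_deriv; assumption.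
  - replace (fun x => edge_len I a x) with (fun x => edge_len I x a)
      by (apply functional_extensionality; intros; apply edge_len_sym).
    apply edge_len_deriv; assumption.
  - apply edge_deriv_pos; assumption.
  - apply edge_deriv_pos; assumption.
Qed.

Lemma edge_len_preserves_smooth I : 0 <= I -> preserves_smooth (edge_len I).
Proof.
  intros HI u v Hu Hv Pu Pv n.
  destruct (Ck_cosh_sinh n) as [Hcosh Hsinh].
  apply (Ck_acosh n (fun p => cosh_edge I (u p) (v p))).
  - unfold cosh_edge. apply Ck_plus; apply Ck_mult; [| |apply Ck_mult; [apply Ck_const|] |];
      [apply Hcosh | apply Hcosh | apply Hsinh | apply Hsinh]; auto.
  - intros p Hp. apply cosh_edge_gt_1; auto.
Qed.

Theorem mainTheorem7 (Iij Ijk Iki : R) (hij : 0 <= Iij) (hjk : 0 <= Ijk) (hki : 0 <= Iki) :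
  (forall r, pos3 r -> pos3 (rhoH Iij Ijk Iki r)) /\
  (forall r s, pos3 r -> pos3 s -> rhoH Iij Ijk Iki r = rhoH Iij Ijk Iki s -> r = s) /\
  smooth_embedding3 (rhoH Iij Ijk Iki).
Proof.
  change (rhoH Iij Ijk Iki) with (cyclic_map (edge_len Iij) (edge_len Ijk) (edge_len Iki)).
  assert (P1 := edge_len_positive_partials Iij hij).
  assert (P2 := edge_len_positive_partials Ijk hjk).
  assert (P3 := edge_len_positive_partials Iki hki).
  assert (Hinv : inverse_continuous3 (cyclic_map (edge_len Iij) (edge_len Ijk) (edge_len Iki)))
    by (apply cyclic_inverse_continuous;
        eauto using positive_partials_increasing, positive_partials_continuous_l).
  assert (Hinj := inverse_continuous3_injective _ Hinv).
  destruct (cyclic_map_smooth (edge_len Iij) (edge_len Ijk) (edge_len Iki)) as [S1 [S2 S3]];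
    try apply edge_len_preserves_smooth; try assumption.
  split; [|split; [exact Hinj|]].
  - intros [[a b] c] [Ha [Hb Hc]]. repeat split; apply edge_len_pos; assumption.
  - repeat split; try assumption. exact (cyclic_immersion _ _ _ _ _ _ _ _ _ P1 P2 P3).
Qed.
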